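(* Let $G$ be a graph on $n\ge 1$ vertices. Then there exist disjoint subsets $S,T\subseteq V(G)$ such that $(S,T)$ realizes $\mu(G)$, $|S|\le (n+1)/2$, and $|T|=|S|-1$.
   Context: All graphs are finite and simple. For a graph $G=(V,E)$ on $n$ vertices, a fractional vertex cover is a function $f:V\to[0,\infty)$ with $f(u)+f(v)\ge 1$ for every edge $uv\in E$; $\tau^*(G)$ denotes the minimum of $\sum_{v\in V}f(v)$ over all fractional vertex covers. For $E'\subseteq E$ let $G-E'=(V,E\setminus E')$. Define $\mu(G)=\min\{|E'| : E'\subseteq E,\ \tau^*(G-E')<n/2\}$. For disjoint $S,T\subseteq V$, $E_G(S;V\setminus T)$ is the set of edges with both endpoints in $S$ or with one endpoint in $S$ and the other in $V\setminus(S\cup T)$. It holds that $\mu(G)=\min|E_G(S;V\setminus T)|$ over disjoint $S,T$ with $|S|>|T|$; a pair $(S,T)$ of disjoint subsets with $|S|>|T|$ and $|E_G(S;V\setminus T)|=\mu(G)$ is said to realize $\mu(G)$. *)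

From HB Require Import structures.
From mathcomp Require Import all_boot all_order all_algebra.
From mathcomp Require Import classical_sets boolp reals Rstruct.
Set Implicit Arguments. Unset Strict Implicit. Unset Printing Implicit Defensive.
Import Order.TTheory GRing.Theory Num.Theory.
Local Open Scope ring_scope.

(* A finite simple graph on vertex set V (a finType) is given by its edge set
   E : {set {set V}}, every edge being a 2-element set {u,v}. *)
Definition simple_edges (V : finType) (E : {set {set V}}) : Prop :=
  forall u, u \in E -> #|u| = 2%N.

Definition frac_cover (V : finType) (E : {set {set V}}) (f : V -> Rdefinitions.R) : Prop :=
  (forall v, (0 <= f v)%R) /\
  (forall x y, [set x; y] \in E -> (1 <= f x + f y)%R).

Definition tau_star (V : finType) (E : {set {set V}}) : Rdefinitions.R :=
  inf [set s : Rdefinitions.R | exists f : V -> Rdefinitions.R, frac_cover E f /\ s = (\sum_(v : V) f v)%R].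

(* The default value
   #|E| of the iterated min is attained by E' = E when n >= 1 (tau^* of the
   empty graph is 0), so this is exactly the minimum. *)
Definition mu (V : finType) (E : {set {set V}}) : nat :=
  (\big[minn/#|E|]_(E' : {set {set V}} |
       (E' \subset E) && `[< (tau_star (E :\: E') < (#|V|%:R / 2%:R))%R >]) #|E'|)%N.

(* E_G(S; V \ T): edges with both endpoints in S, or one endpoint in S and the
   other in V \ (S u T). *)
Definition E_G (V : finType) (E : {set {set V}}) (S T : {set V}) : {set {set V}} :=
  [set u in E | (u \subset S) ||
     [exists x in S, exists y in ~: (S :|: T), u == [set x; y]]].

Definition realizes (V : finType) (E : {set {set V}}) (S T : {set V}) : Prop :=
  [/\ [disjoint S & T], ltn #|T| #|S| & #|E_G E S T| = mu E].

From HB Require Import structures.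
From mathcomp Require Import all_boot all_order all_algebra.
From mathcomp Require Import classical_sets boolp reals Rstruct.
From mathcomp Require Import lra zify.
Set Implicit Arguments. Unset Strict Implicit. Unset Printing Implicit Defensive.
Import Order.TTheory GRing.Theory Num.Theory.
Local Open Scope ring_scope.

(* A pair (S, T) with |S| > |T| yields the fractional cover 0 on S, 1 on T and
   1/2 elsewhere of G - E_G(S; V \ T), of weight (n + |T| - |S|) / 2 < n / 2;
   hence mu(G) <= |E_G(S; V \ T)|.  Conversely, if f is a fractional cover of
   G - E' of weight < n / 2, then for some t > 0 fewer vertices satisfy
   f >= 1/2 + t than f <= 1/2 - t; these two level sets T and S form a pair
   with E_G(S; V \ T) inside E', so mu(G) is realized.  A realizing pair is
   then balanced to |T| = |S| - 1 by adding to T a vertex outside S u T or, when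
   S u T = V, deleting a vertex of S: neither step enlarges E_G(S; V \ T), and
   disjointness gives 2|S| - 1 <= n. *)

Lemma cards_sepD1 (T : finType) (A : {set T}) (P : pred T) a : a \in A ->
  #|[set x in A | P x]| = (P a + #|[set x in A :\ a | P x]|)%N.
Proof.
move=> aA; rewrite (cardsD1 a) inE aA; congr (_ + _)%N.
by apply: eq_card => x; rewrite !inE andbA.
Qed.

Lemma sum_lt_threshold (V : finType) (R : realDomainType)
    (A : {set V}) (g : V -> R) (c : R) :
  \sum_(v in A) g v < #|A|%:R * c ->
  exists2 t : R, 0 < t &
    (#|[set v in A | (c + t <= g v)%R]| < #|[set v in A | (g v <= c - t)%R]|)%N.
Proof.
have [k] := ubnP #|A|; elim: k A => // k IH A ltAk sumA.
have [q0 q0A gq0] : exists2 q, q \in A & g q < c.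
  apply/exists_inP; apply: contraLR sumA => /exists_inPn gec.
  rewrite -leNgt mulr_natl -sumr_const; apply: ler_sum => v vA.
  by rewrite leNgt gec.
have [q /= qA qmin] := arg_minP (P := [pred v | v \in A]) g q0A.
have {q0 q0A gq0}gqc : g q < c by apply: le_lt_trans (qmin q0 q0A) gq0.
pose t0 := c - g q.
have [|cnt_le] :=
  ltnP #|[set v in A | c + t0 <= g v]| #|[set v in A | g v <= c - t0]|.
  by exists t0; rewrite // subr_gt0.
(* Remove a minimiser q and a vertex p with g p >= 2c - g q: both counts drop
   by one at every level t <= c - g q, and the induction returns such a t. *)
have [p] : exists p, p \in [set v in A | c + t0 <= g v].
  apply/card_gt0P; apply: leq_trans cnt_le; apply/card_gt0P.
  by exists q; rewrite inE qA /t0 /=; lra.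
rewrite inE => /andP[pA gp]; rewrite /t0 in gp.
have qAp : q \in A :\ p.
  by rewrite !inE qA andbT; apply/eqP => eq_qp; move: gp; rewrite -eq_qp; lra.
pose A' := A :\ p :\ q.
have cardA : #|A| = #|A'|.+2 by rewrite (cardsD1 p A) (cardsD1 q (A :\ p)) pA qAp.
have sumA' : \sum_(v in A') g v < #|A'|%:R * c.
  move: sumA; rewrite (big_setD1 p) //= (big_setD1 q) //=.
  by rewrite cardA -addn2 natrD mulrDl; lra.
have [|t t_gt0 cnt'] := IH A' _ sumA'; first by lia.
have le_t_t0 : t <= c - g q.
  have [v] : exists v, v \in [set v in A' | g v <= c - t].
    by apply/card_gt0P; apply: leq_ltn_trans cnt'.
  rewrite !inE => /andP[/and3P[_ _ vA] gv]; have := qmin v vA; lra.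
exists t => //.
rewrite !(cards_sepD1 _ pA) !(cards_sepD1 _ qAp) -/A'.
have -> : (c + t <= g p) by lra.
have -> : (c + t <= g q) = false by apply/negbTE; rewrite -ltNge; lra.
have -> : (g p <= c - t) = false by apply/negbTE; rewrite -ltNge; lra.
have -> : (g q <= c - t) by lra.
by rewrite /= add0n ltnS.
Qed.

Local Notation R := Rdefinitions.R.

Lemma tau_star_le_sum (V : finType) (E : {set {set V}}) (f : V -> R) :
  frac_cover E f -> tau_star E <= \sum_v f v.
Proof.
move=> fE; apply: ge_inf; last by exists f.
by exists 0 => _ [g [[g_ge0 _] ->]]; apply: sumr_ge0.
Qed.

Lemma tau_star_lt_cover (V : finType) (E : {set {set V}}) (r : R) :
  tau_star E < r -> exists2 f : V -> R, frac_cover E f & \sum_v f v < r.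
Proof.
move=> /inf_lt[|_ [f [fE ->]]]; last by exists f.
by exists (\sum_(v : V) 1), (fun=> 1); split=> //; split=> [v|x y _]; lra.
Qed.

Lemma sumr_mem (V : finType) (A : {set V}) : \sum_v ((v \in A)%:R : R) = #|A|%:R.
Proof.
by rewrite -sumr_const [RHS]big_mkcond; apply: eq_bigr => v _; case: (v \in A).
Qed.

Section Graph.
Variables (V : finType) (E : {set {set V}}).

Definition half_cover (S T : {set V}) (v : V) : R :=
  (1 + (v \in T)%:R - (v \in S)%:R) / 2.

Lemma sum_half_cover (S T : {set V}) :
  \sum_v half_cover S T v = (#|V|%:R + #|T|%:R - #|S|%:R) / 2.
Proof. by rewrite -mulr_suml sumrB big_split /= !sumr_mem sumr_const. Qed.

Lemma edge_notin_EG_in_T (S T : {set V}) a b : a \in S -> [set a; b] \in E ->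
  [set a; b] \notin E_G E S T -> b \in T.
Proof.
move=> aS abE; rewrite inE abE negb_or => /andP[not_sub not_cross].
have bS : b \notin S.
  by apply: contra not_sub => bS; rewrite finset.subUset !finset.sub1set aS.
apply: contraNT not_cross => bT; apply/exists_inP; exists a => //.
by apply/exists_inP; exists b; rewrite // !inE negb_or bS.
Qed.

Lemma half_cover_frac_cover (S T : {set V}) :
  [disjoint S & T] -> frac_cover (E :\: E_G E S T) (half_cover S T).
Proof.
move=> dST; have f_ge0 v : 0 <= half_cover S T v.
  by rewrite /half_cover; case: (v \in S); case: (v \in T) => /=; lra.
have f_T v : v \in T -> half_cover S T v = 1.
  by move=> vT; rewrite /half_cover vT (disjointFl dST vT) /=; lra.
have f_notS v : v \notin S -> 1 / 2 <= half_cover S T v.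
  by rewrite /half_cover => /negbTE->; case: (v \in T) => /=; lra.
split=> // x y; rewrite inE => /andP[not_EG xyE].
have [xS|xS] := boolP (x \in S).
  by rewrite (f_T y (edge_notin_EG_in_T xS xyE not_EG)) lerDr.
have [yS|yS] := boolP (y \in S).
  rewrite finset.setUC in xyE not_EG.
  by rewrite (f_T x (edge_notin_EG_in_T yS xyE not_EG)) lerDl.
by have := f_notS x xS; have := f_notS y yS; lra.
Qed.

Lemma tau_star_delEG_lt (S T : {set V}) : [disjoint S & T] -> (#|T| < #|S|)%N ->
  tau_star (E :\: E_G E S T) < #|V|%:R / 2%:R.
Proof.
move=> dST ltTS; apply: le_lt_trans (tau_star_le_sum (half_cover_frac_cover dST)) _.
by rewrite sum_half_cover; move: ltTS; rewrite -(ltr_nat R); lra.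
Qed.

Lemma EG_sub_of_tau_star_lt (E' : {set {set V}}) : simple_edges E ->
  tau_star (E :\: E') < #|V|%:R / 2%:R ->
  exists S T : {set V}, [/\ [disjoint S & T], (#|T| < #|S|)%N & E_G E S T \subset E'].
Proof.
move=> simpleE /tau_star_lt_cover[f [f_ge0 f_cov] sum_f].
have [|t t_gt0 ltTS] := @sum_lt_threshold _ _ [set: V] f (1 / 2).
  by rewrite cardsT (eq_bigl xpredT) => [|v]; [lra | rewrite finset.in_setT].
exists [set v in [set: V] | f v <= 1 / 2 - t], [set v in [set: V] | 1 / 2 + t <= f v].
split=> //.
  rewrite finset.disjoints_subset; apply/fintype.subsetP => v.
  by rewrite !inE /= -ltNge; lra.
apply/fintype.subsetP => u; rewrite inE => /andP[uE EGu]; apply: contraT => uE'.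
have cov x y : u = [set x; y] -> 1 <= f x + f y.
  by move=> uxy; apply: f_cov; rewrite -uxy inE uE' uE.
case/orP: EGu => [|/exists_inP[x xS /exists_inP[y yST /eqP/cov]]].
  have /eqP/cards2P[x [y [_ /[dup] uxy ->]]] := simpleE u uE.
  rewrite finset.subUset !finset.sub1set !inE /= => /andP[xS yS].
  by have := cov x y uxy; lra.
by move: xS yST; rewrite !inE /= negb_or -!ltNge; lra.
Qed.

Lemma EG_sub_edges (S T : {set V}) : E_G E S T \subset E.
Proof. by rewrite /E_G setIdE subsetIl. Qed.

Definition mu_feasible (E' : {set {set V}}) : bool :=
  (E' \subset E) && `[< tau_star (E :\: E') < #|V|%:R / 2%:R >].

Lemma mu_bigmin : mu E = \big[Order.min/#|E|]_(E' | mu_feasible E') #|E'|.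
Proof. by rewrite /mu -minEnat. Qed.

Lemma mu_feasible_EG (S T : {set V}) : [disjoint S & T] -> (#|T| < #|S|)%N ->
  mu_feasible (E_G E S T).
Proof.
move=> dST ltTS; rewrite /mu_feasible EG_sub_edges; apply/asboolP.
exact: tau_star_delEG_lt.
Qed.

Lemma mu_le_EG (S T : {set V}) : [disjoint S & T] -> (#|T| < #|S|)%N ->
  (mu E <= #|E_G E S T|)%N.
Proof.
by move=> dST ltTS; rewrite mu_bigmin -leEnat bigmin_le_cond ?mu_feasible_EG.
Qed.

Lemma exists_realizes : simple_edges E -> (0 < #|V|)%N ->
  exists S T : {set V}, realizes E S T.
Proof.
move=> simpleE V_gt0.
have dTO : [disjoint [set: V] & finset.set0].
  by rewrite finset.disjoints_subset finset.setC0.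
have ltOT : (#|@finset.set0 V| < #|[set: V]|)%N by rewrite cards0 cardsT.
have [E' /andP[E'E _]|E0 /andP[_ /asboolP tauE0] muE] :=
  eq_bigmin (x := #|E|) _ mu_feasible (fun E' => #|E'|) (mu_feasible_EG dTO ltOT).
  by rewrite leEnat subset_leq_card.
rewrite -mu_bigmin in muE.
have [S [T [dST ltTS EG_E0]]] := EG_sub_of_tau_star_lt simpleE tauE0.
exists S, T; split=> //; apply/eqP.
by rewrite eqn_leq mu_le_EG // muE subset_leq_card.
Qed.

Lemma EG_antimono_T (S T T' : {set V}) : T \subset T' -> E_G E S T' \subset E_G E S T.
Proof.
move=> sTT'; apply/fintype.subsetP => u; rewrite !inE => /andP[-> /orP[-> //|]].
case/exists_inP => x xS /exists_inP[y yST' uxy]; apply/orP; right.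
apply/exists_inP; exists x => //; apply/exists_inP; exists y => //.
move: yST'; rewrite !inE !negb_or => /andP[-> yT']; apply: contra yT'.
exact: (fintype.subsetP sTT').
Qed.

Lemma EG_delS_sub (S T : {set V}) s : S :|: T = [set: V] ->
  E_G E (S :\ s) T \subset E_G E S T.
Proof.
move=> coverST; apply/fintype.subsetP => u; rewrite !inE => /andP[-> /orP[subS|]].
  by rewrite (fintype.subset_trans subS (subD1set _ _)).
case/exists_inP => x xS /exists_inP[y yST /eqP->]; apply/orP; left.
have : y \in S :|: T by rewrite coverST finset.in_setT.
move: xS yST; rewrite finset.subUset !finset.sub1set !inE !negb_or.
by case/andP=> _ -> /andP[_ /negbTE->]; rewrite orbF.
Qed.

Lemma balance_pair (S T : {set V}) : [disjoint S & T] -> (#|T| < #|S|)%N ->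
  exists S' T' : {set V},
    [/\ [disjoint S' & T'], #|S'| = #|T'|.+1 & E_G E S' T' \subset E_G E S T].
Proof.
have [d] := ubnP (#|S| - #|T|); elim: d S T => // d IH S T ltd dST ltTS.
have [eqST|neqST] := eqVneq #|S| #|T|.+1; first by exists S, T.
suff [S1 [T1 [dST1 ltTS1 gap1 sub1]]] : exists S1 T1 : {set V},
    [/\ [disjoint S1 & T1], (#|T1| < #|S1|)%N, (#|S1| - #|T1| < #|S| - #|T|)%N
      & E_G E S1 T1 \subset E_G E S T].
  have [|S' [T' [dST' cardS' sub']]] := IH S1 T1 _ dST1 ltTS1; first by lia.
  by exists S', T'; split=> //; apply: fintype.subset_trans sub1.
have [v|coverST] := pickP [predC S :|: T].
  rewrite !inE negb_or => /andP[vS vT].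
  have cardvT : #|v |: T| = #|T|.+1 by rewrite cardsU1 vT.
  exists S, (v |: T); split; try lia.
    rewrite finset.disjoints_subset; apply/fintype.subsetP => x xS.
    rewrite !inE negb_or (disjointFr dST xS) andbT.
    by apply: contraTneq xS => ->.
  by apply: EG_antimono_T; apply: finset.subsetUr.
have [s sS] : exists s, s \in S by apply/card_gt0P; lia.
have cardS : #|S| = #|S :\ s|.+1 by rewrite (cardsD1 s S) sS.
exists (S :\ s), T; split; try lia.
  exact: disjointWl (subD1set S s) dST.
apply: EG_delS_sub; apply/finset.setP => x; rewrite finset.in_setT.
by apply/negbFE; exact: coverST x.
Qed.

Lemma realizes_of_EG_sub (S T S' T' : {set V}) : realizes E S T ->
  [disjoint S' & T'] -> (#|T'| < #|S'|)%N -> E_G E S' T' \subset E_G E S T ->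
  realizes E S' T'.
Proof.
move=> [_ _ EG_mu] dST' ltTS' EG_sub; split=> //; apply/eqP.
by rewrite eqn_leq mu_le_EG // -EG_mu subset_leq_card.
Qed.

End Graph.

Theorem lemma16 (V : finType) (E : {set {set V}}) :
  simple_edges E -> (0 < #|V|)%N ->
  exists S T : {set V},
    [/\ [disjoint S & T], realizes E S T,
        ((#|S|%:R : Rdefinitions.R) <= (#|V|%:R + 1) / 2)%R & #|T| = (#|S| - 1)%N].
Proof.
move=> simpleE V_gt0.
have [S [T realST]] := exists_realizes simpleE V_gt0.
have [dST ltTS _] := realST.
have [S' [T' [dST' cardS' EG_sub]]] := balance_pair E dST ltTS.
have ltTS' : (#|T'| < #|S'|)%N by rewrite cardS'.
have realizes' := realizes_of_EG_sub realST dST' ltTS' EG_sub.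
have cardST' : (#|S'| + #|T'| <= #|V|)%N.
  by have := (leq_card_setU S' T').2; rewrite dST' => /eqP <-; apply: max_card.
exists S', T'; split=> //; last by lia.
have : ((#|S'| * 2)%:R <= (#|V| + 1)%:R :> R) by rewrite ler_nat; lia.
by rewrite natrM natrD; lra.
Qed.
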